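(* For every $n>3$, the only graph with $n$ vertices that is minor minimal with respect to spherical dimension $n-1$ is $K_{n-3}+\epsilon_3$; that is, $\mathbb{S}_n=\{K_{n-3}+\epsilon_3\}$.
   Context: All graphs are finite and simple; $\epsilon_3$ is the graph with three vertices and no edges, and $G+H$ is obtained from disjoint copies of $G$ and $H$ by adding all edges between them. A minor of $G$ is a graph obtained by a sequence of vertex deletions, edge deletions and edge contractions (discarding loops and multiple edges). A unit-distance embedding of $G$ in $\mathbb{R}^n$ is an injective map $f$ from the vertex set to $\mathbb{R}^n$ with $|f(u)-f(v)|=1$ for every edge $uv$ and no $f(w)$ on the segment $[f(u),f(v)]$ for an edge $uv$ with $w\notin\{u,v\}$. $G$ admits a spherical embedding of dimension $k$ and radius $r$ if $G$ has a unit-distance embedding in $\mathbb{R}^k$ all of whose vertices lie on a sphere $\{x\in\mathbb{R}^k:|x-c|=r\}$. $\operatorname{sdim}G$ is the least $k$ such that $G$ admits a spherical embedding of dimension $k$ and some radius $r<1$. $G$ is minor minimal with respect to spherical dimension $d$ if $\operatorname{sdim}G=d$ and every proper minor of $G$ has spherical dimension less than $d$. $\mathbb{S}_n$ denotes the set of $n$-vertex graphs that are minor minimal with respect to spherical dimension $n-1$. *)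

From HB Require Import structures.
From mathcomp Require Import all_boot all_order all_algebra.
From mathcomp Require Import Rstruct.
Set Implicit Arguments. Unset Strict Implicit. Unset Printing Implicit Defensive.
Import Order.TTheory GRing.Theory Num.Theory.
Local Open Scope ring_scope.

Notation RR := Rdefinitions.R.

Definition simple_graph (T : finType) (e : rel T) : Prop :=
  symmetric e /\ irreflexive e.

Definition graph_iso (T' T : finType) (e' : rel T') (e : rel T) : Prop :=
  exists f : T' -> T, bijective f /\ forall x y, e' x y = e (f x) (f y).

Definition connected_set (T : finType) (e : rel T) (S : {set T}) : Prop :=
  forall a b, a \in S -> b \in S ->
    connect (fun x y => [&& e x y, x \in S & y \in S]) a b.

Definition is_minor (T' T : finType) (e' : rel T') (e : rel T) : Prop :=
  exists phi : T' -> {set T},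
    [/\ forall x, phi x != set0,
        forall x y, x != y -> [disjoint phi x & phi y],
        forall x, connected_set e (phi x) &
        forall x y, e' x y -> exists a b, [/\ a \in phi x, b \in phi y & e a b]].

Definition is_proper_minor (T' T : finType) (e' : rel T') (e : rel T) : Prop :=
  is_minor e' e /\ ~ graph_iso e' e.

Definition enorm (k : nat) (v : 'rV[RR]_k) : RR :=
  Num.sqrt (\sum_(i < k) (v ord0 i) ^+ 2).

Definition unit_distance_embedding (T : finType) (e : rel T) (k : nat)
    (f : T -> 'rV[RR]_k) : Prop :=
  [/\ injective f,
      forall u v, e u v -> enorm (f u - f v) = 1 &
      forall u v w, e u v -> w != u -> w != v ->
        ~ (exists t : RR, [/\ 0 <= t, t <= 1 &
              f w = (1 - t) *: f u + t *: f v])].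

Definition spherical_embedding (T : finType) (e : rel T) (k : nat) (r : RR) : Prop :=
  exists f : T -> 'rV[RR]_k, unit_distance_embedding e f /\
    exists c : 'rV[RR]_k, forall x, enorm (f x - c) = r.

Definition sph_embeddable (T : finType) (e : rel T) (k : nat) : Prop :=
  exists r : RR, r < 1 /\ spherical_embedding e k r.

Definition sdim_eq (T : finType) (e : rel T) (d : nat) : Prop :=
  sph_embeddable e d /\ forall k, (k < d)%N -> ~ sph_embeddable e k.

Definition sdim_lt (T : finType) (e : rel T) (d : nat) : Prop :=
  exists k, (k < d)%N /\ sph_embeddable e k.

Definition minor_minimal_sdim (T : finType) (e : rel T) (d : nat) : Prop :=
  sdim_eq e d /\
  forall (T' : finType) (e' : rel T'), simple_graph e' ->
    is_proper_minor e' e -> sdim_lt e' d.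

Definition in_S (n : nat) (T : finType) (e : rel T) : Prop :=
  #|T| = n /\ minor_minimal_sdim e n.-1.

Definition K_plus_eps3_rel (m : nat) : rel ('I_m + 'I_3)%type :=
  fun x y => match x, y with
             | inl i, inl j => i != j
             | inl _, inr _ => true
             | inr _, inl _ => true
             | inr _, inr _ => false
             end.
Arguments K_plus_eps3_rel m : clear implicits.

(* Two disjoint non-edges, or a vertex with three non-neighbours, make G a
   spanning subgraph of K_(n-4) joined with a 4-cycle, resp. with a triangle and
   an isolated vertex; coning n - 4 times a planar embedding of these embeds G
   on a sphere of radius < 1 in dimension n - 2.  Otherwise all non-edges of G
   lie inside three vertices, i.e. K_(n-3) + eps_3 is a spanning subgraph of G.
   On the other hand K_m + eps_3 has no unit-distance embedding on a sphere in
   R^(m+1): seen from the centre, the clique vertices have Gram matrix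
   s J + I/2 with 1 + 2 s m <> 0, so they span a hyperplane, and the differences
   of the three independent vertices are orthogonal to it; these vertices would
   be collinear, but a line meets a sphere in at most two points.  A proper
   minor has fewer vertices or is a proper spanning subgraph; this gives the
   minimality of K_(n-3) + eps_3 and rules out its proper spanning supergraphs. *)

From mathcomp Require Import all_boot all_order all_algebra Rstruct.
From mathcomp Require Import lra ring zify.
From Stdlib Require Import Classical.
Set Implicit Arguments. Unset Strict Implicit. Unset Printing Implicit Defensive.
Import Order.TTheory GRing.Theory Num.Theory.
Local Open Scope ring_scope.

(** * Euclidean geometry of row vectors *)

Section RowDot.
Variable k : nat.
Implicit Types u v w : 'rV[RR]_k.

Definition dot u v : RR := \sum_(i < k) u ord0 i * v ord0 i.
Definition sqnorm u : RR := \sum_(i < k) u ord0 i ^+ 2.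

Lemma sqnormE u : sqnorm u = dot u u.
Proof. by apply: eq_bigr => i _; rewrite expr2. Qed.

Lemma dotC u v : dot u v = dot v u.
Proof. by apply: eq_bigr => i _; rewrite mulrC. Qed.

Lemma dotDl u v w : dot (u + v) w = dot u w + dot v w.
Proof. by rewrite -big_split; apply: eq_bigr => i _; rewrite mxE mulrDl. Qed.

Lemma dotZl a u w : dot (a *: u) w = a * dot u w.
Proof. by rewrite mulr_sumr; apply: eq_bigr => i _; rewrite mxE mulrA. Qed.

Lemma dotNl u w : dot (- u) w = - dot u w.
Proof. by rewrite -scaleN1r dotZl mulN1r. Qed.

Lemma dotBl u v w : dot (u - v) w = dot u w - dot v w.
Proof. by rewrite dotDl dotNl. Qed.

Lemma dotDr u v w : dot w (u + v) = dot w u + dot w v.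
Proof. by rewrite dotC dotDl !(dotC w). Qed.

Lemma dotBr u v w : dot w (u - v) = dot w u - dot w v.
Proof. by rewrite dotC dotBl !(dotC w). Qed.

Lemma dotZr a u w : dot w (a *: u) = a * dot w u.
Proof. by rewrite dotC dotZl dotC. Qed.

Lemma dot0l v : dot 0 v = 0.
Proof. by rewrite -(scale0r 0) dotZl mul0r. Qed.

Lemma dot_suml (I : finType) (F : I -> 'rV[RR]_k) v :
  dot (\sum_i F i) v = \sum_i dot (F i) v.
Proof. exact: (big_morph (dot^~ v) (fun x y => dotDl x y v) (dot0l v)). Qed.

Lemma sqnorm_ge0 u : 0 <= sqnorm u.
Proof. by apply: sumr_ge0 => i _; rewrite sqr_ge0. Qed.

Lemma sqnorm_eq0 u : sqnorm u = 0 -> u = 0.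
Proof.
move=> /psumr_eq0P u0; apply/rowP => i; rewrite mxE; apply/eqP.
by rewrite -sqrf_eq0; apply/eqP/u0 => // j _; rewrite sqr_ge0.
Qed.

Lemma sqnormN u : sqnorm (- u) = sqnorm u.
Proof. by rewrite !sqnormE dotNl dotC dotNl opprK. Qed.

Lemma sqnormB u v : sqnorm (u - v) = dot u u + dot v v - 2 * dot u v.
Proof. by rewrite sqnormE !(dotBl, dotBr) (dotC v u); ring. Qed.

Lemma enorm_sqnorm u x : 0 <= x -> (enorm u = x) <-> (sqnorm u = x ^+ 2).
Proof.
move=> x0; rewrite /enorm -/(sqnorm u); split => [<-|->].
  by rewrite sqr_sqrtr ?sqnorm_ge0.
by rewrite sqrtr_sqr ger0_norm.
Qed.

Lemma enorm_ge0 u : 0 <= enorm u.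
Proof. exact: sqrtr_ge0. Qed.

Lemma sphere_line P Q r2 t :
  sqnorm P = r2 -> sqnorm Q = r2 -> sqnorm ((1 - t) *: P + t *: Q) = r2 ->
  [\/ t = 0, t = 1 | P = Q].
Proof.
rewrite !sqnormE => hP hQ.
rewrite !(dotDl, dotDr, dotZl, dotZr) hP hQ (dotC Q P) => /eqP.
rewrite -subr_eq0 => /eqP hPQ.
have : t * (1 - t) * sqnorm (P - Q) = 0.
  by rewrite sqnormE !(dotBl, dotBr) hP hQ (dotC Q P) -[RHS]oppr0 -hPQ; ring.
move/eqP; rewrite !mulf_eq0 subr_eq0 => /orP [/orP [/eqP|/eqP]|/eqP/sqnorm_eq0/eqP].
- by constructor 1.
- by constructor 2.
- by rewrite subr_eq0 => /eqP; constructor 3.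
Qed.

End RowDot.

Lemma sqnorm_row_mx j k (a : 'rV[RR]_j) (b : 'rV[RR]_k) :
  sqnorm (row_mx a b) = sqnorm a + sqnorm b.
Proof.
by rewrite /sqnorm big_split_ord; congr (_ + _); apply: eq_bigr => i _;
  rewrite ?row_mxEl ?row_mxEr.
Qed.

Lemma sqnorm0 k : sqnorm (0 : 'rV[RR]_k) = 0.
Proof. by rewrite sqnormE dot0l. Qed.

Lemma sqnorm_const (a : RR) : sqnorm (const_mx a : 'rV[RR]_1) = a ^+ 2.
Proof. by rewrite /sqnorm big_ord1 mxE. Qed.

(** * Spherical unit-distance embeddings *)

(* The segment condition of [unit_distance_embedding] is dropped: for points on
   a sphere it holds automatically, see [sphere_line]. *)
Definition sphere_unit_emb (T : finType) (e : rel T) (k : nat) (r : RR) : Prop :=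
  exists (f : T -> 'rV[RR]_k) (c : 'rV[RR]_k),
    [/\ injective f, forall u v, e u v -> sqnorm (f u - f v) = 1 &
        forall x, sqnorm (f x - c) = r ^+ 2].

(* The bound r^2 <= 1/2 is the invariant that survives taking cones. *)
Definition small_sphere_emb (T : finType) (e : rel T) (k : nat) : Prop :=
  exists r, [/\ 0 <= r, r ^+ 2 <= 1/2 & sphere_unit_emb e k r].

Section SphereUnitEmb.
Variables (T : finType) (e : rel T).

Lemma sphere_unit_emb_sph_embeddable k r :
  0 <= r -> r < 1 -> sphere_unit_emb e k r -> sph_embeddable e k.
Proof.
move=> r0 r1 [f [c [finj fe fs]]]; exists r; split => //; exists f.
split; last by exists c => x; apply/enorm_sqnorm.
split=> // [u v /fe|u v w _ wu wv [t [_ _ fw]]]; first by rewrite enorm_sqnorm ?expr1n.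
have fwc : f w - c = (1 - t) *: (f u - c) + t *: (f v - c).
  by rewrite fw !scalerBr addrACA -opprD -scalerDl subrK scale1r.
have [t0|t1|] := sphere_line (fs u) (fs v) (etrans (esym (congr1 _ fwc)) (fs w)).
- by move/eqP: wu; apply; apply: finj; rewrite fw t0 subr0 scale1r scale0r addr0.
- by move/eqP: wv; apply; apply: finj; rewrite fw t1 subrr scale0r scale1r add0r.
- move/addIr/finj => uv; move/eqP: wv; apply; apply: finj.
  by rewrite fw uv -scalerDl subrK scale1r.
Qed.

Lemma small_sphere_emb_sph_embeddable k : small_sphere_emb e k -> sph_embeddable e k.
Proof.
move=> [r [r0 r2 he]]; apply: sphere_unit_emb_sph_embeddable he => //; nra.
Qed.

Lemma sph_embeddable_sphere_unit_emb k :
  sph_embeddable e k -> exists r, sphere_unit_emb e k r.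
Proof.
move=> [r [_ [f [[finj fe _] [c fc]]]]].
exists r, f, c; split=> // [u v /fe|x].
  by rewrite enorm_sqnorm ?expr1n.
by apply/enorm_sqnorm; rewrite -?(fc x) ?enorm_ge0.
Qed.

Lemma sphere_unit_emb_sub (T' : finType) (e' : rel T') k r (g : T -> T') :
  injective g -> (forall x y, e x y -> e' (g x) (g y)) ->
  sphere_unit_emb e' k r -> sphere_unit_emb e k r.
Proof.
move=> ginj ge [f [c [finj fe fs]]]; exists (f \o g), c; split=> //.
- exact: inj_comp.
- by move=> u v /ge /fe.
- by move=> x; apply: fs.
Qed.

Lemma sphere_unit_emb_bij (T' : finType) (e' : rel T') k r (g : T' -> T) :
  bijective g -> (forall x y, e (g x) (g y) -> e' x y) ->
  sphere_unit_emb e' k r -> sphere_unit_emb e k r.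
Proof.
move=> [h gK hK] ge; apply: sphere_unit_emb_sub (can_inj hK) _ => x y.
by rewrite -{1}(hK x) -{1}(hK y) => /ge.
Qed.

Lemma small_sphere_emb_bij (T' : finType) (e' : rel T') k (g : T' -> T) :
  bijective g -> (forall x y, e (g x) (g y) -> e' x y) ->
  small_sphere_emb e' k -> small_sphere_emb e k.
Proof.
move=> g_bij ge [r [r0 r2 he]]; exists r; split=> //.
exact: sphere_unit_emb_bij g_bij ge he.
Qed.

Lemma sphere_unit_emb_widen k k' r :
  (k <= k')%N -> sphere_unit_emb e k r -> sphere_unit_emb e k' r.
Proof.
move=> /subnK <- [f [c [finj fe fs]]].
pose pad (u : 'rV[RR]_k) : 'rV[RR]_(k' - k + k) := row_mx 0 u.
have sqnorm_padB u v : sqnorm (pad u - pad v) = sqnorm (u - v).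
  by rewrite opp_row_mx add_row_mx sqnorm_row_mx subr0 sqnorm0 add0r.
exists (pad \o f), (pad c); split=> [x y /= /(congr1 rsubmx)| u v /fe <- | x].
- by rewrite !row_mxKr => /finj.
- exact: sqnorm_padB.
- by rewrite /= sqnorm_padB.
Qed.

End SphereUnitEmb.

Definition cone_rel (T : finType) (e : rel T) : rel (option T) :=
  fun x y => match x, y with
             | Some a, Some b => e a b
             | None, None => false
             | _, _ => true
             end.

Definition join_clique (m : nat) (T : finType) (e : rel T) : rel ('I_m + T)%type :=
  fun x y => match x, y with
             | inl i, inl j => i != j
             | inr a, inr b => e a b
             | _, _ => true
             end.
Arguments join_clique m {T} e.

(* The apex sits at height h = sqrt (1 - r^2) above the centre c of the old
   sphere; the new sphere through the apex and the old one has radius 1/(2h). *)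
Lemma small_sphere_emb_cone (T : finType) (e : rel T) k :
  small_sphere_emb e k -> small_sphere_emb (cone_rel e) (1 + k).
Proof.
move=> [r [r0 r2 [f [c [finj fe fs]]]]].
pose h := Num.sqrt (1 - r ^+ 2).
have hh : h ^+ 2 = 1 - r ^+ 2 by rewrite sqr_sqrtr // subr_ge0; lra.
have h0 : 0 < h by rewrite sqrtr_gt0 subr_gt0; lra.
pose r' := (2 * h)^-1.
have hr' : 2 * h * r' = 1 by rewrite mulfV // mulf_neq0 // gt_eqF.
exists r'; split; [by rewrite invr_ge0; lra | nra |].
pose F o : 'rV[RR]_(1 + k) :=
  if o is Some x then row_mx 0 (f x) else row_mx (const_mx h) c.
exists F, (row_mx (const_mx (h - r')) c); split.
- move=> [x|] [y|] //= /eq_row_mx [].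
  + by move=> _ /finj ->.
  + by move=> /rowP /(_ ord0); rewrite !mxE => /eqP; rewrite eq_sym gt_eqF.
  + by move=> /rowP /(_ ord0); rewrite !mxE => /eqP; rewrite gt_eqF.
- move=> [x|] [y|] //= exy; rewrite opp_row_mx add_row_mx sqnorm_row_mx.
  + by rewrite subr0 sqnorm0 add0r fe.
  + by rewrite sub0r sqnormN sqnorm_const fs; lra.
  + by rewrite subr0 sqnorm_const -opprB sqnormN fs; lra.
- move=> [x|] /=; rewrite opp_row_mx add_row_mx sqnorm_row_mx.
  + by rewrite sub0r sqnormN sqnorm_const fs; nra.
  + have -> : const_mx h - const_mx (h - r') = const_mx r' :> 'rV[RR]_1.
      by apply/rowP => i; rewrite !mxE; ring.
    by rewrite subrr sqnorm0 addr0 sqnorm_const.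
Qed.

Lemma small_sphere_emb_join (T : finType) (e : rel T) k m :
  small_sphere_emb e k -> small_sphere_emb (join_clique m e) (m + k).
Proof.
move=> he; elim: m => [|m /small_sphere_emb_cone [r [r0 r2 hcone]]].
  pose g (x : ('I_0 + T)%type) : T :=
    match x with inl i => False_rect T (notF (ltn_ord i)) | inr a => a end.
  have [r [r0 r2 hr]] := he.
  exists r; split=> //; apply: (sphere_unit_emb_sub (g := g)) hr.
  - by move=> [[]//|a] [[]//|b] /= ->.
  - by move=> [[]//|a] [[]//|b].
exists r; split=> //.
pose g x : option ('I_m + T)%type :=
  match x with inl i => omap inl (unlift ord0 i) | inr a => Some (inr a) end.
apply: (sphere_unit_emb_sub (g := g)) hcone.
  move=> [i|a] [j|b] //=; try by case: unliftP.
    by case: unliftP => [i' ->|->]; case: unliftP => [j' ->|->] // [->].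
  by move=> [->].
move=> [i|a] [j|b] //=; try by case: unliftP.
by case: unliftP => [i' ->|->]; case: unliftP => [j' ->|->] //=; rewrite ?eqxx.
Qed.

Lemma small_sphere_emb_K1 : small_sphere_emb (fun _ _ : 'I_1 => false) 0.
Proof.
exists 0; split=> //; first by rewrite expr0n /=; lra.
exists (fun _ => 0), 0; split=> // [x y _|x]; first by rewrite !ord1.
by rewrite /sqnorm big_ord0 expr0n.
Qed.

Lemma sph_embeddable_small (T : finType) (e : rel T) N :
  irreflexive e -> (#|T| <= N.+1)%N -> sph_embeddable e N.
Proof.
move=> irr cardT; rewrite -[N]addn0; apply: small_sphere_emb_sph_embeddable.
have [r [r0 r2 hK]] := small_sphere_emb_join N small_sphere_emb_K1.
have cardT' : (#|T| <= #|{: 'I_N + 'I_1}|)%N by rewrite card_sum !card_ord addn1.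
pose g x := enum_val (widen_ord cardT' (enum_rank x)).
have ginj : injective g.
  by move=> x y /enum_val_inj [] /val_inj /enum_rank_inj.
exists r; split=> //; apply: (sphere_unit_emb_sub ginj _ hK) => x y exy.
have : g x != g y by rewrite (inj_eq ginj); apply: contraTneq exy => ->; rewrite irr.
by case: (g x) (g y) => [i|i] [j|j] //=; rewrite !ord1 eqxx.
Qed.

Definition pt (x y : RR) : 'rV[RR]_2 := \row_(i < 2) [:: x; y]`_i.

Lemma sqnorm_pt x y : sqnorm (pt x y) = x ^+ 2 + y ^+ 2.
Proof. by rewrite /sqnorm !big_ord_recr big_ord0 /= !mxE add0r. Qed.

Lemma pt_sub x y x' y' : pt x y - pt x' y' = pt (x - x') (y - y').
Proof. by apply/rowP => i; rewrite !mxE; case: i => [[|[|?]] ?]. Qed.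

Lemma pt_inj x y x' y' : pt x y = pt x' y' -> x = x' /\ y = y'.
Proof. by move=> /rowP h; move: (h ord0) (h (lift ord0 ord0)); rewrite !mxE. Qed.

(* The 4-cycle 0, 2, 1, 3: the complement of two disjoint edges 01 and 23. *)
Definition C4_rel : rel 'I_4 := fun i j => (i < 2)%N != (j < 2)%N.

(* A triangle on 1, 2, 3 and the isolated vertex 0: the complement of a claw. *)
Definition K3_K1_rel : rel 'I_4 := fun i j => [&& i != j, i != 0 :> nat & j != 0 :> nat].

Lemma small_sphere_emb_C4 : small_sphere_emb C4_rel 2.
Proof.
pose t := Num.sqrt (1 / 2 : RR).
have tt : t ^+ 2 = 1 / 2 by rewrite sqr_sqrtr //; lra.
have t0 : 0 < t by rewrite sqrtr_gt0; lra.
exists t; split; [lra | lra |].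
pose f (i : 'I_4) :=
  match val i with 0 => pt t 0 | 1 => pt (- t) 0 | 2 => pt 0 t | _ => pt 0 (- t) end.
exists f, 0; split.
- case=> [[|[|[|[|i]]]] hi] //; case=> [[|[|[|[|j]]]] hj] //= /pt_inj [] ? ?;
    first [exact: val_inj | exfalso; lra].
- case=> [[|[|[|[|i]]]] hi] //; case=> [[|[|[|[|j]]]] hj] //= _;
    rewrite /f /= pt_sub sqnorm_pt; nra.
- case=> [[|[|[|[|i]]]] hi] //; rewrite /f /= subr0 sqnorm_pt; nra.
Qed.

Lemma small_sphere_emb_K3_K1 : small_sphere_emb K3_K1_rel 2.
Proof.
pose t := Num.sqrt (1 / 3 : RR).
have tt : t ^+ 2 = 1 / 3 by rewrite sqr_sqrtr //; lra.
have t0 : 0 < t by rewrite sqrtr_gt0; lra.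
exists t; split; [lra | lra |].
pose f (i : 'I_4) := match val i with
  | 0 => pt (- t) 0 | 1 => pt t 0 | 2 => pt (- t / 2) (1 / 2) | _ => pt (- t / 2) (- (1 / 2))
  end.
exists f, 0; split.
- case=> [[|[|[|[|i]]]] hi] //; case=> [[|[|[|[|j]]]] hj] //= /pt_inj [] ? ?;
    first [exact: val_inj | exfalso; lra].
- case=> [[|[|[|[|i]]]] hi] //; case=> [[|[|[|[|j]]]] hj] //= _;
    rewrite /f /= pt_sub sqnorm_pt; nra.
- case=> [[|[|[|[|i]]]] hi] //; rewrite /f /= subr0 sqnorm_pt; nra.
Qed.

(** * No spherical embedding of K_m + eps_3 in dimension m + 1 *)

Lemma exists_lin_dep (F : fieldType) (I : finType) k (g : I -> 'rV[F]_k) :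
  (k < #|I|)%N -> exists2 a : I -> F, exists i, a i != 0 & \sum_i a i *: g i = 0.
Proof.
move=> kI; pose M := \matrix_(i < #|I|) g (enum_val i).
have : kermx M != 0.
  rewrite kermx_eq0; apply/negP => /eqP rkM.
  by have := rank_leq_col M; rewrite rkM leqNgt kI.
case/rowV0Pn => v /sub_kermxP vM v0.
exists (fun x => v 0 (enum_rank x)).
  have [i vi] : exists i, v 0 i != 0.
    apply/existsP; apply: contraNT v0 => /existsPn v0'.
    by apply/eqP/rowP => i; rewrite mxE; apply/eqP/negbNE.
  by exists (enum_val i); rewrite enum_valK.
rewrite -[RHS]vM mulmx_sum_row (reindex enum_rank) /=; last exact/onW_bij/enum_rank_bij.
by apply: eq_bigr => x _; rewrite rowK enum_rankK.
Qed.

Lemma sphere_three_points_free k (P0 P1 P2 : 'rV[RR]_k) r2 b0 b1 :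
  sqnorm P0 = r2 -> sqnorm P1 = r2 -> sqnorm P2 = r2 -> uniq [:: P0; P1; P2] ->
  b0 *: (P1 - P0) + b1 *: (P2 - P0) = 0 -> b0 = 0 /\ b1 = 0.
Proof.
move=> h0 h1 h2 /=; rewrite !inE !negb_or andbT => /andP [/andP [P01 P02] P12] hb.
have [b10|b1n0] := eqVneq b1 0.
  move: hb; rewrite b10 scale0r addr0 => /eqP; rewrite scaler_eq0 subr_eq0 (eq_sym P1).
  by rewrite (negbTE P01) orbF => /eqP.
pose l := - b0 / b1.
have d2 : P2 - P0 = l *: (P1 - P0).
  apply: (scalerI b1n0); rewrite scalerA mulrC /l mulfVK // scaleNr.
  by apply/eqP; rewrite -addr_eq0 addrC hb.
have P2E : P2 = (1 - l) *: P0 + l *: P1.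
  by rewrite -[P2](subrK P0) d2 addrC scalerBr scalerBl scale1r addrA addrAC.
exfalso; have [l0|l1|P01'] := sphere_line h0 h1 (etrans (congr1 _ (esym P2E)) h2).
- by move: P02; rewrite P2E l0 subr0 scale1r scale0r addr0 eqxx.
- by move: P12; rewrite P2E l1 subrr scale0r add0r scale1r eqxx.
- by move: P01; rewrite P01' eqxx.
Qed.

Section CliqueGram.
Variables (k m : nat) (s : RR) (x : 'I_m -> 'rV[RR]_k).
Hypothesis gram : forall i j, dot (x i) (x j) = s + (i == j)%:R / 2.

Lemma dot_comb_clique (a : 'I_m -> RR) j :
  dot (\sum_i a i *: x i) (x j) = s * \sum_i a i + a j / 2.
Proof.
rewrite dot_suml (eq_bigr (fun i => a i * s + a i * ((i == j)%:R / 2))); last first.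
  by move=> i _; rewrite dotZl gram mulrDr.
rewrite big_split /= -mulr_suml mulrC; congr (_ + _).
rewrite (bigD1 j) //= eqxx mul1r big1 ?addr0 // => i /negbTE ->.
by rewrite mul0r mulr0.
Qed.

Lemma clique_gram_nondegenerate y :
  (0 < m)%N -> (forall i, dot (x i) y = s) -> 1 + 2 * s * m%:R != 0.
Proof.
move=> m0 xy; apply/eqP => deg.
pose sigma := \sum_i 1 *: x i.
have sigma_x j : dot sigma (x j) = 0.
  by rewrite dot_comb_clique sumr_const card_ord -mulr_natr; lra.
have sigma0 : sigma = 0.
  apply: sqnorm_eq0; rewrite sqnormE {2}/sigma dotC dot_suml big1 // => i _.
  by rewrite dotZl dotC sigma_x mulr0.
have : dot sigma y = m%:R * s.
  rewrite dot_suml (eq_bigr (fun=> s)) ?sumr_const ?card_ord ?mulr_natl // => i _.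
  by rewrite dotZl xy mul1r.
rewrite sigma0 dot0l => /esym/eqP.
rewrite mulf_eq0 pnatr_eq0 -[m == 0%N]negbK -lt0n m0 /= => /eqP s0.
by move: deg; rewrite s0 mulr0 mul0r addr0 => /eqP; rewrite oner_eq0.
Qed.

Lemma clique_coef_eq0 (a : 'I_m -> RR) y :
  1 + 2 * s * m%:R != 0 -> (forall i, dot (x i) y = 0) ->
  \sum_i a i *: x i + y = 0 -> forall i, a i = 0.
Proof.
move=> nondeg xy comb0.
have coef j : s * \sum_i a i + a j / 2 = 0.
  by rewrite -dot_comb_clique -[LHS]addr0 -(xy j) dotC -dotDr comb0 dotC dot0l.
have sum_a0 : \sum_i a i = 0.
  have : \sum_(j < m) (s * \sum_i a i + a j / 2) = 0 by rewrite big1.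
  rewrite big_split /= sumr_const card_ord -mulr_suml -mulr_natr => h.
  have : (\sum_i a i) * (1 + 2 * s * m%:R) = 0 by nra.
  by move/eqP; rewrite mulf_eq0 (negbTE nondeg) orbF => /eqP.
by move=> i; move: (coef i); rewrite sum_a0 mulr0 add0r; lra.
Qed.

End CliqueGram.

Lemma K_plus_eps3_no_sphere_unit_emb m r :
  (0 < m)%N -> ~ sphere_unit_emb (K_plus_eps3_rel m) m.+1 r.
Proof.
move=> m0 [f [c [finj fe fs]]].
pose w x := f x - c; pose s := r ^+ 2 - 1 / 2.
have winj : injective w by move=> x y /addIr /finj.
have w_sqnorm x : sqnorm (w x) = r ^+ 2 by exact: fs.
have w_edge x y : K_plus_eps3_rel m x y -> dot (w x) (w y) = s.
  move/fe; have -> : f x - f y = w x - w y by rewrite /w opprB addrA subrK.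
  by rewrite sqnormB -!sqnormE !w_sqnorm /s; lra.
pose v i := w (inl i).
have gram i j : dot (v i) (v j) = s + (i == j)%:R / 2.
  have [->|ij] := eqVneq i j; last by rewrite w_edge // mul0r addr0.
  by rewrite -sqnormE w_sqnorm /s /=; lra.
have nondeg := clique_gram_nondegenerate gram m0 (fun i => w_edge (inl i) (inr ord0) isT).
pose d (a : 'I_2) := w (inr (lift ord0 a)) - w (inr ord0).
pose g z := match z with inl i => v i | inr a => d a end.
have [coef [z coef_z] comb0] : exists2 coef, exists z, coef z != 0 & \sum_z coef z *: g z = 0.
  by apply: exists_lin_dep; rewrite card_sum !card_ord addn2.
rewrite big_sumType /= in comb0.
have v_d i : dot (v i) (\sum_a coef (inr a) *: d a) = 0.
  rewrite dotC dot_suml big1 // => b _.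
  by rewrite dotZl dotBl dotC w_edge // dotC w_edge // subrr mulr0.
have coef_inl := clique_coef_eq0 gram nondeg v_d comb0.
have eps3_uniq : uniq [:: w (inr ord0); w (inr (lift ord0 ord0));
                          w (inr (lift ord0 (lift ord0 ord0)))].
  by rewrite /= !inE !(inj_eq winj).
move: comb0; rewrite big1 ?add0r => [|i _]; last by rewrite coef_inl scale0r.
rewrite !big_ord_recl big_ord0 addr0.
move=> /(sphere_three_points_free (w_sqnorm _) (w_sqnorm _) (w_sqnorm _) eps3_uniq) [c0 c1].
move: coef_z; case: z => [i|a]; first by rewrite coef_inl eqxx.
have [->|->] : a = ord0 \/ a = lift ord0 ord0.
  by case: a => [[|[|//]] ?]; [left|right]; apply: val_inj.
- by rewrite c0 eqxx.
- by rewrite c1 eqxx.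
Qed.

(** * Graphs without two disjoint non-edges or a non-edge claw *)

Local Close Scope ring_scope.

Lemma exists_notin (T : finType) (s : seq T) : size s < #|T| -> exists x, x \notin s.
Proof.
move=> sT; apply: NNPP => all_in.
have : #|T| <= #|s|.
  by apply: subset_leq_card; apply/subsetP => x _; apply/negPn/negP => xs; apply: all_in; exists x.
by rewrite leqNgt (leq_ltn_trans (card_size s) sT).
Qed.

Lemma exists_sum_bij_nth (T : finType) m (s : seq T) (x0 : T) :
  uniq s -> #|T| = m + size s ->
  exists iota : 'I_m + 'I_(size s) -> T,
    [/\ bijective iota, forall i, iota (inr i) = nth x0 s i &
        forall i, iota (inl i) \notin s].
Proof.
move=> us cardT.
have card_notin : #|[set x | x \notin s]| = m.
  apply/eqP; rewrite -(eqn_add2l (size s)) [size s + m]addnC -cardT -(card_uniqP us).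
  by rewrite -(cardC (mem s)) eqn_add2l cardsE; apply/eqP/eq_card => x; rewrite !inE.
pose iota (x : 'I_m + 'I_(size s)) : T := match x with
  | inl i => enum_val (cast_ord (esym card_notin) i)
  | inr i => nth x0 s i
  end.
have iota_inl i : iota (inl i) \notin s.
  by have := enum_valP (cast_ord (esym card_notin) i); rewrite inE.
have iota_inj : injective iota.
  case=> i; case=> j /= eij.
  - by move/enum_val_inj/cast_ord_inj: eij => ->.
  - by move: (iota_inl i); rewrite /= eij mem_nth.
  - by move: (iota_inl j); rewrite /= -eij mem_nth.
  - by move/eqP: eij; rewrite nth_uniq // => /eqP/val_inj ->.
exists iota; split=> //; apply: inj_card_bij iota_inj _.
by rewrite card_sum !card_ord cardT.
Qed.

Lemma sph_embeddable_of_quadruple (T : finType) (e : rel T) (H : rel 'I_4) (a b c d : T) :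
  irreflexive e -> uniq [:: a; b; c; d] -> small_sphere_emb H 2 ->
  (forall i j : 'I_4, e (nth a [:: a; b; c; d] i) (nth a [:: a; b; c; d] j) -> H i j) ->
  sph_embeddable e (#|T| - 2).
Proof.
move=> irr u4 embH eH.
have card4 : 4 <= #|T| by rewrite -[4]/(size [:: a; b; c; d]) -(card_uniqP u4) max_card.
have cardT : #|T| = #|T| - 4 + size [:: a; b; c; d] by rewrite subnK.
have [iota [iota_bij iota_inr _]] := exists_sum_bij_nth a u4 cardT.
have -> : #|T| - 2 = #|T| - 4 + 2 by lia.
have embJ := small_sphere_emb_join (#|T| - 4) embH.
apply/small_sphere_emb_sph_embeddable/(small_sphere_emb_bij iota_bij _ embJ).
move=> [i|i] [j|j] //=; last by rewrite !iota_inr => /eH.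
by apply: contraTneq => ->; rewrite irr.
Qed.

Definition two_disjoint_nonedges (T : finType) (e : rel T) : Prop :=
  exists a b c d, [/\ uniq [:: a; b; c; d], ~~ e a b & ~~ e c d].

Definition nonedge_claw (T : finType) (e : rel T) : Prop :=
  exists a b c d, uniq [:: a; b; c; d] /\ [/\ ~~ e a b, ~~ e a c & ~~ e a d].

Lemma sph_embeddable_two_disjoint_nonedges (T : finType) (e : rel T) :
  simple_graph e -> two_disjoint_nonedges e -> sph_embeddable e (#|T| - 2).
Proof.
move=> [sym irr] [a [b [c [d [u4 ab cd]]]]].
apply: (sph_embeddable_of_quadruple irr u4 small_sphere_emb_C4).
case=> [[|[|[|[|i]]]] hi] //; case=> [[|[|[|[|j]]]] hj] //=;
  by rewrite ?irr // ?(negbTE ab) ?(negbTE cd) // sym ?(negbTE ab) ?(negbTE cd).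
Qed.

Lemma sph_embeddable_nonedge_claw (T : finType) (e : rel T) :
  simple_graph e -> nonedge_claw e -> sph_embeddable e (#|T| - 2).
Proof.
move=> [sym irr] [a [b [c [d [u4 [ab ac ad]]]]]].
apply: (sph_embeddable_of_quadruple irr u4 small_sphere_emb_K3_K1).
case=> [[|[|[|[|i]]]] hi] //; case=> [[|[|[|[|j]]]] hj] //=;
  by rewrite ?irr // ?(negbTE ab) ?(negbTE ac) ?(negbTE ad) //
             sym ?(negbTE ab) ?(negbTE ac) ?(negbTE ad).
Qed.

Ltac solve_uniq := rewrite /= ?inE ?negb_or ?andbT;
  repeat (apply/andP; split); by rewrite // eq_sym.

Section NonedgesInTriple.
Variables (T : finType) (e : rel T).
Hypotheses (sym : symmetric e) (no2 : ~ two_disjoint_nonedges e)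
  (noclaw : ~ nonedge_claw e).

Lemma nonedge_mem_triple a b c x y :
  uniq [:: a; b; c] -> ~~ e a b -> ~~ e a c -> x != y -> ~~ e x y -> x \in [:: a; b; c].
Proof.
rewrite /= !inE !negb_or andbT => /andP [/andP [ab ac] bc] nab nac xy nxy.
apply/negPn/negP; rewrite !negb_or => /and3P [xa xb xc].
have [ya|ya] := eqVneq y a.
  by apply: noclaw; exists a, b, c, x; split; [solve_uniq | split; rewrite // sym -ya].
have [yb|yb] := eqVneq y b.
  by apply: no2; exists a, c, x, b; split; [solve_uniq | | rewrite -yb].
by apply: no2; exists a, b, x, y; split; first solve_uniq.
Qed.

Lemma nonedges_in_triple : 2 < #|T| ->
  exists p q s, uniq [:: p; q; s] /\
    forall x y, x != y -> ~~ e x y -> x \in [:: p; q; s].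
Proof.
move=> card3.
have [[a [b [ab nab]]]|no_nonedge] := classic (exists a b, a != b /\ ~~ e a b); last first.
  have [p _] := exists_notin (s := [::]) (ltnW (ltnW card3)).
  have [q qp] := exists_notin (s := [:: p]) (ltnW card3).
  have [s sqp] := exists_notin (s := [:: p; q]) card3.
  exists p, q, s; split.
    by move: qp sqp; rewrite !inE negb_or => qp /andP [sp sq]; solve_uniq.
  by move=> x y xy nxy; case: no_nonedge; exists x, y.
have [c] := exists_notin (s := [:: a; b]) card3; rewrite !inE negb_or => /andP [ca cb].
have [[c' [c'ab [nac'|nbc']]]|adj] :=
  classic (exists c, c \notin [:: a; b] /\ (~~ e a c \/ ~~ e b c)).
- move: c'ab; rewrite !inE negb_or => /andP [c'a c'b].
  exists a, b, c'; split; first solve_uniq.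
  by move=> x y; apply: nonedge_mem_triple; first solve_uniq.
- move: c'ab; rewrite !inE negb_or => /andP [c'a c'b].
  exists b, a, c'; split; first solve_uniq.
  by move=> x y; apply: nonedge_mem_triple => //; [solve_uniq | rewrite sym].
exists a, b, c; split; first solve_uniq.
move=> x y xy nxy; rewrite !inE; apply/negPn/negP; rewrite !negb_or => /and3P [xa xb _].
have [ya|ya] := eqVneq y a.
  by apply: adj; exists x; rewrite !inE negb_or xa xb sym -ya; split=> //; left.
have [yb|yb] := eqVneq y b.
  by apply: adj; exists x; rewrite !inE negb_or xa xb (sym b) -yb; split=> //; right.
by apply: no2; exists a, b, x, y; split; first solve_uniq.
Qed.

End NonedgesInTriple.

(** * Minors and the two directions of the theorem *)

Lemma minor_card_lt_or_spanning (T' T : finType) (e' : rel T') (e : rel T) :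
  is_minor e' e -> #|T'| < #|T| \/
    exists2 g : T' -> T, bijective g & forall x y, e' x y -> e (g x) (g y).
Proof.
move=> [phi [phi_n0 phi_dis _ phi_e]].
pose rep x := xchoose (set0Pn _ (phi_n0 x)).
have rep_phi x : rep x \in phi x := xchooseP (set0Pn _ (phi_n0 x)).
have phi_uniq x y a : a \in phi x -> a \in phi y -> x = y.
  move=> ax ay; apply/eqP; apply: contraTT isT => /phi_dis /disjointFr /(_ ax).
  by rewrite ay.
have rep_inj : injective rep by move=> x y rxy; apply: (phi_uniq x y (rep x)); rewrite // rxy.
have := leq_card rep rep_inj; rewrite leq_eqVlt => /orP [/eqP cardT|]; last by left.
right; have rep_bij : bijective rep by apply: inj_card_bij rep_inj _; rewrite cardT.
exists rep => // x y /phi_e [a [b [ax ay ab]]].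
have [g _ gK] := rep_bij.
have rep_g c z : c \in phi z -> rep z = c.
  by move=> cz; rewrite -(gK c) (phi_uniq (g c) z c) // -{1}(gK c) rep_phi.
by rewrite (rep_g a x) ?(rep_g b y).
Qed.

Definition edge_set (T : finType) (e : rel T) : {set T * T} := [set u | e u.1 u.2].

Lemma graph_iso_card_edge_set (T' T : finType) (e' : rel T') (e : rel T) :
  graph_iso e' e -> #|edge_set e'| = #|edge_set e|.
Proof.
move=> [f [f_bij fe]]; have [g _ gK] := f_bij.
have -> : edge_set e = [set (f u.1, f u.2) | u in edge_set e'].
  apply/setP => -[x y]; rewrite inE /=; apply/idP/imsetP => [exy|[[x' y'] /=]].
    by exists (g x, g y); rewrite ?inE /= ?fe ?gK.
  by rewrite inE /= fe => exy [-> ->].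
by rewrite card_imset // => -[a b] [c d] [] /(bij_inj f_bij) -> /(bij_inj f_bij) ->.
Qed.

Lemma spanning_subgraph_iso_or_new_edge (T' T : finType) (e' : rel T') (e : rel T)
    (g : T' -> T) :
  bijective g -> (forall x y, e' x y -> e (g x) (g y)) ->
  graph_iso e' e \/ exists x y, e (g x) (g y) && ~~ e' x y.
Proof.
move=> g_bij ge; have [new|no_new] := classic (exists x y, e (g x) (g y) && ~~ e' x y).
  by right.
left; exists g; split=> // x y; apply/idP/idP => [/ge //|exy].
by apply/negPn/negP => nexy; apply: no_new; exists x, y; rewrite exy.
Qed.

Lemma spanning_subgraph_proper_minor (T' T : finType) (e' : rel T') (e : rel T) (g : T' -> T) :
  bijective g -> (forall x y, e' x y -> e (g x) (g y)) ->
  (exists x y, e (g x) (g y) && ~~ e' x y) -> is_proper_minor e' e.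
Proof.
move=> g_bij ge [x0 [y0 /andP [exy0 nexy0]]]; have g_inj := bij_inj g_bij; split.
  exists (fun x => [set g x]); split.
  - by move=> x; apply/set0Pn; exists (g x); rewrite inE.
  - by move=> x y xy; rewrite disjoints1 inE (inj_eq g_inj).
  - by move=> x a b; rewrite !inE => /eqP -> /eqP ->; apply: connect0.
  - by move=> x y /ge exy; exists (g x), (g y); rewrite !inE !eqxx.
move=> /graph_iso_card_edge_set card_eq.
have : #|[set (g u.1, g u.2) | u in edge_set e']| < #|edge_set e|.
  apply: proper_card; apply/properP; split.
    by apply/subsetP => z /imsetP [[x y]]; rewrite inE /= => /ge exy ->; rewrite inE.
  exists (g x0, g y0); first by rewrite inE.
  apply/imsetP => -[[x y]]; rewrite inE /= => exy [/g_inj x0x /g_inj y0y].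
  by move: nexy0; rewrite x0x y0y exy.
by rewrite card_imset ?card_eq ?ltnn // => -[a b] [c d] /= [] /g_inj -> /g_inj ->.
Qed.

Lemma graph_iso_sym (T' T : finType) (e' : rel T') (e : rel T) :
  graph_iso e' e -> graph_iso e e'.
Proof.
move=> [f [f_bij fe]]; have [g fK gK] := f_bij.
by exists g; split=> [|x y]; [exists f | rewrite fe !gK].
Qed.

Lemma K_plus_eps3_simple m : simple_graph (K_plus_eps3_rel m).
Proof. by split=> [[i|i] [j|j] /=|[i|i] /=]; rewrite ?eqxx // eq_sym. Qed.

Lemma not_sph_embeddable_K_plus_eps3_subgraph (T : finType) (e : rel T) m k
    (g : 'I_m + 'I_3 -> T) :
  (0 < m)%N -> (k <= m.+1)%N -> injective g ->
  (forall x y, K_plus_eps3_rel m x y -> e (g x) (g y)) -> ~ sph_embeddable e k.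
Proof.
move=> m0 km g_inj ge /sph_embeddable_sphere_unit_emb [r].
move=> /(sphere_unit_emb_sub g_inj ge) /(sphere_unit_emb_widen km).
exact: K_plus_eps3_no_sphere_unit_emb.
Qed.

Lemma K_plus_eps3_proper_spanning_subgraph (T : finType) (e : rel T) m
    (g : T -> 'I_m + 'I_3) :
  symmetric e -> bijective g -> (forall x y, e x y -> K_plus_eps3_rel m (g x) (g y)) ->
  (exists x y, K_plus_eps3_rel m (g x) (g y) && ~~ e x y) ->
  two_disjoint_nonedges e \/ nonedge_claw e.
Proof.
move=> sym g_bij ge [x0 [y0 /andP [Kxy0 nexy0]]].
apply: NNPP => /not_or_and [no2 noclaw]; have [h _ hK] := g_bij.
pose t a := h (inr a).
have t_nonedge a b : ~~ e (t a) (t b) by apply/negP => /ge; rewrite /t !hK.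
have t_uniq : uniq [:: t ord0; t (lift ord0 ord0); t (lift ord0 (lift ord0 ord0))].
  by rewrite /= !inE !(inj_eq (can_inj hK)).
have x0y0 : x0 != y0 by apply: contraTneq Kxy0 => ->; rewrite (proj2 (K_plus_eps3_simple m)).
have in_t x y : x != y -> ~~ e x y -> exists a, x = t a.
  move=> xy /(nonedge_mem_triple sym no2 noclaw t_uniq (t_nonedge _ _) (t_nonedge _ _) xy).
  by rewrite !inE => /or3P [] /eqP ->; eexists.
have [a x0a] := in_t _ _ x0y0 nexy0.
have [b y0b] : exists b, y0 = t b by apply: (in_t y0 x0); rewrite 1?eq_sym 1?sym.
by move: Kxy0; rewrite x0a y0b /t !hK.
Qed.

Lemma in_S_graph_iso_K_plus_eps3 n (T : finType) (e : rel T) :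
  3 < n -> simple_graph e -> in_S n e -> graph_iso e (K_plus_eps3_rel (n - 3)).
Proof.
move=> n3 e_simple [cardT [[_ no_low] minimal]]; have [sym _] := e_simple.
have low_dim : n - 2 < n.-1 by lia.
have no2 : ~ two_disjoint_nonedges e.
  by move/(sph_embeddable_two_disjoint_nonedges e_simple); rewrite cardT; apply: no_low low_dim.
have noclaw : ~ nonedge_claw e.
  by move/(sph_embeddable_nonedge_claw e_simple); rewrite cardT; apply: no_low low_dim.
have [p [q [s [pqs cover]]]] := nonedges_in_triple sym no2 noclaw (ltac:(lia) : 2 < #|T|).
have [iota [iota_bij iota_inr iota_inl]] :=
  exists_sum_bij_nth (m := n - 3) p pqs (ltac:(rewrite cardT /=; lia)).
have iota_e x y : K_plus_eps3_rel (n - 3) x y -> e (iota x) (iota y).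
  move=> Kxy; apply/negPn/negP => nexy.
  have xy : iota x != iota y.
    rewrite (bij_eq iota_bij); apply: contraTneq Kxy => ->.
    by rewrite (proj2 (K_plus_eps3_simple _)).
  have yx : iota y != iota x by rewrite eq_sym.
  have neyx : ~~ e (iota y) (iota x) by rewrite sym.
  move: (cover _ _ xy nexy) (cover _ _ yx neyx).
  by case: x y Kxy {xy yx nexy neyx} => [i|a] [j|b] //= _; rewrite ?(negbTE (iota_inl _)).
have [/graph_iso_sym //|/(spanning_subgraph_proper_minor iota_bij iota_e) proper] :=
  spanning_subgraph_iso_or_new_edge iota_bij iota_e.
have [k [kn embK]] := minimal _ _ (K_plus_eps3_simple _) proper.
exfalso; apply: (@not_sph_embeddable_K_plus_eps3_subgraph _ _ (n - 3) k id) embK => //.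
all: lia.
Qed.

Lemma graph_iso_K_plus_eps3_in_S n (T : finType) (e : rel T) :
  3 < n -> simple_graph e -> #|T| = n -> graph_iso e (K_plus_eps3_rel (n - 3)) -> in_S n e.
Proof.
move=> n3 [_ irr] cardT [f [f_bij fe]]; have [g _ gK] := f_bij.
split=> //; split; first split.
- by apply: sph_embeddable_small irr _; lia.
- move=> k kn; apply: (not_sph_embeddable_K_plus_eps3_subgraph (g := g)) => //.
  + lia.
  + lia.
  + exact: can_inj gK.
  + by move=> x y; rewrite fe !gK.
move=> T' e' e'_simple [minor not_iso]; exists (n - 2); split; first lia.
have [card_lt|[h h_bij he']] := minor_card_lt_or_spanning minor.
  by apply: sph_embeddable_small e'_simple.2 _; lia.
have cardT' : #|T'| = n by rewrite -cardT; apply: bij_eq_card h_bij.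
have [//|new_edge] := spanning_subgraph_iso_or_new_edge h_bij he'.
have [two|claw] : two_disjoint_nonedges e' \/ nonedge_claw e'.
- apply: (K_plus_eps3_proper_spanning_subgraph e'_simple.1 (bij_comp f_bij h_bij)).
    by move=> x y /he'; rewrite fe.
  by have [x [y exy]] := new_edge; exists x, y; rewrite -fe.
- by rewrite -cardT'; apply: sph_embeddable_two_disjoint_nonedges e'_simple two.
- by rewrite -cardT'; apply: sph_embeddable_nonedge_claw e'_simple claw.
Qed.

Theorem mainTheorem18 (n : nat) : (3 < n)%N ->
  forall (T : finType) (e : rel T), simple_graph e -> #|T| = n ->
    (in_S n e <-> graph_iso e (K_plus_eps3_rel (n - 3))).
Proof.
move=> n3 T e e_simple cardT; split.
- exact: in_S_graph_iso_K_plus_eps3.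
- exact: graph_iso_K_plus_eps3_in_S.
Qed.
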